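(* The topology on $\underline{\mathcal{X}}$ induced by $d_{\underline{\mathcal{X}}}$ is strictly finer than the subspace topology induced by the product topology on $\mathcal{X}^{\mathbb{Z}_-}$ if and only if $(\mathcal{X},d_{\mathcal{X}})$ is unbounded. In particular, if $\mathcal{X}$ is compact, then so is $\underline{\mathcal{X}}$.
   Context: $\mathbb{Z}_-=\{\dots,-2,-1\}$. $(\mathcal{X},d_{\mathcal{X}})$ is a Polish space with a complete metric. $\mathbf{w}=(w_t)_{t\le-1}\subseteq(0,1)$ is a monotone sequence with $\sum_{t\le-1}w_t=1$ and $\sup_{n\ge1}(\sup_{t\le-1}w_t/w_{t-n})^{1/n}<\infty$. Fix $x_*\in\mathcal{X}$. $\underline{\mathcal{X}}$ is the set of $\mathbf{x}\in\mathcal{X}^{\mathbb{Z}_-}$ with $\sum_{t\le-1}w_td_{\mathcal{X}}(x_t,x_* )<\infty$, equipped with the metric $d_{\underline{\mathcal{X}}}(\mathbf{x}^1,\mathbf{x}^2)=\sum_{t\le-1}w_td_{\mathcal{X}}(x^1_t,x^2_t)$. *)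

From mathcomp Require Import all_boot all_order all_algebra.
From mathcomp Require Import all_classical all_reals all_analysis.
Import numFieldNormedType.Exports.
Local Open Scope classical_set_scope.
Local Open Scope ring_scope.

Section Defs.
Context {R : realType}.

Definition is_metric {T : Type} (d : T -> T -> R) : Prop :=
  [/\ forall x y, 0 <= d x y,
      forall x y, d x y = 0 <-> x = y,
      forall x y, d x y = d y x &
      forall x y z, d x z <= d x y + d y z].

Definition d_complete {T : Type} (d : T -> T -> R) : Prop :=
  forall u : nat -> T,
    (forall e, 0 < e -> exists N, forall m n, (N <= m)%N -> (N <= n)%N ->
        d (u m) (u n) < e) ->
    exists l, forall e, 0 < e -> exists N, forall n, (N <= n)%N -> d (u n) l < e.

Definition d_separable {T : Type} (d : T -> T -> R) : Prop :=
  exists D : nat -> T, forall x e, 0 < e -> exists n, d x (D n) < e.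

Definition polish {T : Type} (d : T -> T -> R) : Prop :=
  [/\ is_metric d, d_complete d & d_separable d].

Definition unbounded {T : Type} (d : T -> T -> R) : Prop :=
  forall M : R, exists x y, M < d x y.

Definition metric_open {S : Type} (dist : S -> S -> R) (A : set S) : Prop :=
  forall x, A x -> exists e, 0 < e /\ forall y, dist x y < e -> A y.

(* Weights: w k stands for w_{-(k+1)}, k : nat, so t = -(k+1) in Z_-;
   w_{t-n} is then w (k + n). *)
Definition admissible_weights (w : nat -> R) : Prop :=
  [/\ forall k, 0 < w k < 1,
      (forall k, w k.+1 <= w k) \/ (forall k, w k <= w k.+1),
      ((fun n : nat => \sum_(k < n) w k) @ \oo --> (1 : R)) &
      exists C : R, forall n k, (1 <= n)%N ->
        (w k / w (k + n)%N) `^ (n%:R)^-1 <= C].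

Definition in_wspace {T : Type} (w : nat -> R) (d : T -> T -> R) (xs : T)
  (x : nat -> T) : Prop :=
  cvgn (fun n => \sum_(k < n) w k * d (x k) xs).

Definition wspace {T : Type} (w : nat -> R) (d : T -> T -> R) (xs : T) :=
  {x : nat -> T | in_wspace w d xs x}.

Definition wdist {T : Type} (w : nat -> R) (d : T -> T -> R) (xs : T)
  (a b : wspace w d xs) : R :=
  limn (fun n => \sum_(k < n) w k * d (sval a k) (sval b k)).

(* open sets of the product topology on T^{Z_-} (basic cylinder neighbourhoods) *)
Definition prod_open {T : Type} (d : T -> T -> R) (O : set (nat -> T)) : Prop :=
  forall x, O x -> exists N e, 0 < e /\
    forall y, (forall k, (k < N)%N -> d (x k) (y k) < e) -> O y.

Definition subspace_prod_open {T : Type} (d : T -> T -> R) (P : (nat -> T) -> Prop)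
  (A : set {x : nat -> T | P x}) : Prop :=
  exists O, prod_open d O /\ A = (fun a => O (sval a)).

End Defs.

Definition strictly_finer {S : Type} (op1 op2 : set S -> Prop) : Prop :=
  (forall A, op2 A -> op1 A) /\ (exists A, op1 A /\ ~ op2 A).

Definition opencover_compact {S : Type} (op : set S -> Prop) : Prop :=
  forall (I : Type) (F : I -> set S), (forall i, op (F i)) ->
    (forall x, exists i, F i x) ->
    exists (n : nat) (f : 'I_n -> I), forall x, exists j, F (f j) x.

From mathcomp Require Import all_boot all_order all_algebra.
From mathcomp Require Import all_classical all_reals all_analysis.
From mathcomp Require Import lra.
Import Order.TTheory GRing.Theory Num.Theory.
Import numFieldNormedType.Exports.
Local Open Scope classical_set_scope.
Local Open Scope ring_scope.

(* Since w_k d(x_k, y_k) is one term of the weighted distance, every cylinder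
   {y | d(x_k, y_k) < e for k < N} contains a ball, so the product topology is
   always coarser.  If d <= M, the coordinates beyond N contribute at most
   M (1 - w_0 - ... - w_{N-1}), which is small for large N, so every ball also
   contains a cylinder and the two topologies coincide.  If d is unbounded, the
   unit ball around a constant sequence contains no cylinder: changing the single
   coordinate N to a point at distance > 1 / w_N leaves the ball.  Finally a
   compact space is bounded, so the weighted space is then the full product with
   the product topology, which is compact by the diagonal argument: without a
   finite subcover one chooses the coordinates one at a time so that no cylinder
   around the chosen prefix is finitely covered, and the resulting sequence lies
   in no open set of the cover. *)

Section FiniteSubcovers.
Variables (S I : Type) (F : I -> set S).

Definition finitely_covered (A : set S) : Prop :=
  exists (J : finType) (f : J -> I), forall x, A x -> exists j, F (f j) x.

Lemma finitely_covered_sub (A B : set S) :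
  A `<=` B -> finitely_covered B -> finitely_covered A.
Proof. by move=> AB [J [f Bf]]; exists J, f => x /AB /Bf. Qed.

Lemma finitely_covered_bigcup (K : finType) (A : K -> set S) :
  (forall k, finitely_covered (A k)) -> finitely_covered (\bigcup_k A k).
Proof.
move=> Acov.
have /choice[Jf AJf] : forall k, exists Jf : {J : finType & J -> I},
    forall x, A k x -> exists j, F (projT2 Jf j) x.
  by move=> k; have [J [f Af]] := Acov k; exists (existT _ J f).
exists {k : K & projT1 (Jf k)}, (fun kj => projT2 (Jf (tag kj)) (tagged kj)).
by move=> x [k _ /AJf[j Fj]]; exists (@Tagged K k (fun k => projT1 (Jf k)) j).
Qed.

Lemma finitely_covered_setT : finitely_covered setT ->
  exists n (f : 'I_n -> I), forall x, exists j, F (f j) x.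
Proof.
move=> [J [f Jf]]; exists #|J|, (f \o enum_val) => x.
by have [j Fj] := Jf x Logic.I; exists (enum_rank j); rewrite /= enum_rankK.
Qed.

End FiniteSubcovers.

Arguments finitely_covered {S I} F A.
Arguments finitely_covered_sub {S I F A B}.
Arguments finitely_covered_bigcup {S I F K A}.
Arguments finitely_covered_setT {S I F}.

Lemma opencover_compact_subtype {S : Type} {P : S -> Prop}
    {op : set S -> Prop} {opP : set {x | P x} -> Prop} :
  (forall x, P x) ->
  (forall A, opP A -> exists O, op O /\ A = (fun a => O (sval a))) ->
  opencover_compact op -> opencover_compact opP.
Proof.
move=> Pall opP_op op_cpt I F Fopen Fcov.
have /choice[U HU] : forall i, exists U, op U /\ F i = (fun a => U (sval a)).
  by move=> i; exact: opP_op.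
have [|n [f Ucov]] := op_cpt I U (fun i => (HU i).1).
  by move=> x; have [i] := Fcov (exist _ x (Pall x)); rewrite (HU i).2; exists i.
by exists n, f => a; have [j] := Ucov (sval a); exists j; rewrite (HU (f j)).2.
Qed.

Lemma metric_open_ball {R : realType} {S : Type} (dist : S -> S -> R) t r :
  (forall x y z, dist x z <= dist x y + dist y z) ->
  metric_open dist [set u | dist t u < r].
Proof.
move=> dist_tri u /= tu; exists (r - dist t u); split; first by rewrite subr_gt0.
by move=> v uv; have := dist_tri t u v; lra.
Qed.

Definition update {T : Type} (x : nat -> T) (N : nat) (t : T) : nat -> T :=
  fun k => if k == N then t else x k.

Definition cylinder {R : realType} {T : Type} (d : T -> T -> R)
    (x : nat -> T) (N : nat) (e : R) : set (nat -> T) :=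
  [set y | forall k, (k < N)%N -> d (x k) (y k) < e].

Section MetricFacts.
Context {R : realType} {T : Type} {d : T -> T -> R}.
Hypothesis dxx : forall x, d x x = 0.
Hypothesis dsym : forall x y, d x y = d y x.
Hypothesis dtri : forall x y z, d x z <= d x y + d y z.

Lemma unbounded_far_from (xs : T) :
  unbounded d -> forall M, exists u, M < d u xs.
Proof.
move=> dunb M; have [p [q pq]] := dunb (M + M).
have := dtri p xs q; rewrite (dsym xs q) => pxq.
have [Mp|pM] := ltrP M (d p xs); first by exists p.
by exists q; lra.
Qed.

Lemma not_unbounded_bound :
  ~ unbounded d -> exists2 M, 0 <= M & forall x y, d x y <= M.
Proof.
move=> dbnd; have /existsNP[M /forallNP nfar] := dbnd.
exists (Num.max M 0) => [|x y]; first by rewrite le_max lexx orbT.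
rewrite le_max; apply/orP; left; rewrite leNgt; apply/negP => Mxy.
by apply: (nfar x); exists y.
Qed.

Lemma opencover_compact_not_unbounded :
  opencover_compact (metric_open d) -> ~ unbounded d.
Proof.
move=> cpt dunb.
have [|n [f fcov]] := cpt T (fun t => [set u | d t u < 1])
  (fun t => metric_open_ball d t 1 dtri).
  by move=> x; exists x; rewrite /= dxx ltr01.
pose M := \big[Num.max/0]_i \big[Num.max/0]_j d (f i) (f j).
have [x [y Mxy]] := dunb (M + 2).
have [i /= ix] := fcov x; have [j /= jy] := fcov y.
have Mij : d (f i) (f j) <= M.
  exact: le_trans (le_bigmax _ (fun j => d (f i) (f j)) j) (le_bigmax _ _ i).
have := dtri x (f i) y; have := dtri (f i) (f j) y; rewrite (dsym x (f i)).
lra.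
Qed.

End MetricFacts.

Section ProductCompact.
Context {R : realType} {T : Type} {d : T -> T -> R}.
Hypothesis dxx : forall x, d x x = 0.
Hypothesis dtri : forall x y z, d x z <= d x y + d y z.
Hypothesis T_compact : opencover_compact (metric_open d).

Section Covers.
Context {I : Type} (F : I -> set (nat -> T)).

Definition cylinders_uncovered (N : nat) (x : nat -> T) : Prop :=
  forall e, 0 < e -> ~ finitely_covered F (cylinder d x N e).

Lemma cylinders_uncovered_ext N x y : (forall k, (k < N)%N -> x k = y k) ->
  cylinders_uncovered N x -> cylinders_uncovered N y.
Proof.
move=> xy xunc e e0 ycov; apply: (xunc e e0).
by apply: finitely_covered_sub ycov => z xz k kN; rewrite -xy //; apply: xz.
Qed.

Lemma cylinders_uncovered_update N x :
  cylinders_uncovered N x -> exists t, cylinders_uncovered N.+1 (update x N t).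
Proof.
move=> xunc; apply: contrapT => /forallNP allcov.
have /choice[E HE] : forall t, exists E, 0 < E /\
    finitely_covered F (cylinder d (update x N t) N.+1 E).
  move=> t; apply: contrapT => /forallNP nocov; apply: (allcov t) => e e0 cov.
  by apply: (nocov e); split.
(* finitely many balls B(t, E t) cover T, and the cylinder around x of their
   smallest radius lies in the union of the corresponding cylinders *)
have [|m [f fcov]] := T_compact T (fun t => [set u | d t u < E t])
  (fun t => metric_open_ball d t (E t) dtri).
  by move=> t; exists t; rewrite /= dxx; case: (HE t).
pose e := \big[Num.min/1]_j E (f j).
apply: (xunc e); first by apply: lt_bigmin => // j _; case: (HE (f j)).
pose B := \bigcup_j cylinder d (update x N (f j)) N.+1 (E (f j)).
apply: (finitely_covered_sub (B := B)).
  move=> y xy; have [j /= fjy] := fcov (y N); exists j => // k.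
  rewrite ltnS leq_eqVlt /update => /orP[/eqP->|kN]; first by rewrite eqxx.
  by rewrite ltn_eqF //; apply: lt_le_trans (xy k kN) _; exact: bigmin_le.
by apply: finitely_covered_bigcup => j; case: (HE (f j)).
Qed.

Lemma uncovered_sequence : ~ finitely_covered F setT ->
  exists x, forall N, cylinders_uncovered N x.
Proof.
move=> Fnocov; have [x0 _] : exists x0 : nat -> T, True.
  apply: contrapT => /forallNP empty; apply: Fnocov; exists void, (of_void _).
  by move=> x; have := empty x.
have /choice[g Hg] : forall p : nat * (nat -> T), exists t,
    cylinders_uncovered p.1 p.2 -> cylinders_uncovered p.1.+1 (update p.2 p.1 t).
  move=> [N x] /=.
  have [/cylinders_uncovered_update[t ?]|xcov] := pselect (cylinders_uncovered N x).
    by exists t.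
  by exists (x0 0%N) => /xcov.
pose X := fix X n := if n is n'.+1 then update (X n') n' (g (n', X n')) else x0.
have X_unc N : cylinders_uncovered N (X N).
  elim: N => [e _ cov|N IH]; last exact: Hg (N, X N) IH.
  by apply: Fnocov; apply: finitely_covered_sub cov.
have X_stable k n : (k < n)%N -> X n k = X k.+1 k.
  elim: n => // n IH; rewrite ltnS leq_eqVlt => /orP[/eqP->//|kn].
  by rewrite /= /update ltn_eqF // IH.
exists (fun k => X k.+1 k) => N.
by apply: cylinders_uncovered_ext (X_unc N) => k /X_stable.
Qed.

End Covers.

Lemma prod_opencover_compact : opencover_compact (prod_open d).
Proof.
move=> I F F_open Fcov; apply: finitely_covered_setT.
apply: contrapT => /uncovered_sequence[x xunc].
have [i Fix] := Fcov x; have [N [e [e0 cylF]]] := F_open i x Fix.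
apply: (xunc N e e0); exists unit, (fun=> i) => y xy; exists tt.
exact: cylF.
Qed.

End ProductCompact.

Section WeightedDistance.
Context {R : realType} {T : Type} {d : T -> T -> R} {w : nat -> R} (xs : T).
Hypothesis d_ge0 : forall x y, 0 <= d x y.
Hypothesis dxx : forall x, d x x = 0.
Hypothesis dsym : forall x y, d x y = d y x.
Hypothesis dtri : forall x y z, d x z <= d x y + d y z.
Hypothesis w_gt0 : forall k, 0 < w k.
Hypothesis w_sum1 : (fun n : nat => \sum_(k < n) w k) @ \oo --> (1 : R).

Definition wsum (a b : nat -> T) (n : nat) : R :=
  \sum_(k < n) w k * d (a k) (b k).

Notation W := (wspace w d xs).
Notation wd := (wdist w d xs).

Lemma wsum_ge0 a b n : 0 <= wsum a b n.
Proof. by apply: sumr_ge0 => k _; rewrite mulr_ge0 // ltW. Qed.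

Lemma nondecreasing_wsum a b : nondecreasing_seq (wsum a b).
Proof.
apply/nondecreasing_seqP => n; rewrite /wsum big_ord_recr /= lerDl.
by rewrite mulr_ge0 // ltW.
Qed.

Lemma wsum_term_le a b k : w k * d (a k) (b k) <= wsum a b k.+1.
Proof. by rewrite /wsum big_ord_recr /= lerDr wsum_ge0. Qed.

Lemma wsum_sym a b : wsum a b = wsum b a.
Proof. by apply: funext => n; apply: eq_bigr => k _; rewrite dsym. Qed.

Lemma wsum_triangle a b c n : wsum a c n <= wsum a b n + wsum b c n.
Proof.
rewrite /wsum -big_split; apply: ler_sum => k _ /=.
by rewrite -mulrDr ler_wpM2l // ltW.
Qed.

Lemma sum_weights_le1 n : \sum_(k < n) w k <= 1.
Proof.
have w_nd : nondecreasing_seq (fun n => \sum_(k < n) w k).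
  by apply/nondecreasing_seqP => m; rewrite big_ord_recr /= lerDl ltW.
have := nondecreasing_cvgn_le w_nd (cvgP _ w_sum1) n.
by rewrite (cvg_lim (@Rhausdorff R) w_sum1).
Qed.

Lemma cvg_wsum (a b : W) : cvgn (wsum (sval a) (sval b)).
Proof.
apply: nondecreasing_is_cvgn; first exact: nondecreasing_wsum.
have bound (c : W) n :
    wsum (sval c) (fun=> xs) n <= limn (wsum (sval c) (fun=> xs)).
  have c_cvg : cvgn (wsum (sval c) (fun=> xs)) := svalP c.
  exact: nondecreasing_cvgn_le (nondecreasing_wsum _ _) c_cvg n.
exists (limn (wsum (sval a) (fun=> xs)) + limn (wsum (sval b) (fun=> xs))).
move=> _ [n _ <-]; apply: le_trans (wsum_triangle _ (fun=> xs) _ n) _.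
by rewrite [wsum (fun=> xs) _]wsum_sym; apply: lerD.
Qed.

Lemma wsum_le_wdist (a b : W) n : wsum (sval a) (sval b) n <= wd a b.
Proof.
exact: nondecreasing_cvgn_le (nondecreasing_wsum _ _) (cvg_wsum a b) n.
Qed.

Lemma wdist_le (a b : W) B :
  (forall n, wsum (sval a) (sval b) n <= B) -> wd a b <= B.
Proof. by move=> aB; apply: limr_le; [exact: cvg_wsum | exact: nearW]. Qed.

Lemma wdist_triangle (a b c : W) : wd a c <= wd a b + wd b c.
Proof.
apply: wdist_le => n; apply: le_trans (wsum_triangle _ (sval b) _ n) _.
by apply: lerD; apply: wsum_le_wdist.
Qed.

Lemma wdistxx (a : W) : wd a a = 0.
Proof.
apply/eqP; rewrite eq_le (le_trans (wsum_ge0 _ _ 0) (wsum_le_wdist a a 0)) andbT.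
by apply: wdist_le => n; rewrite /wsum big1 // => k _; rewrite dxx mulr0.
Qed.

Lemma metric_open_subspace_prod_open (A : set W) :
  subspace_prod_open d (in_wspace w d xs) A -> metric_open wd A.
Proof.
move=> [U [U_open ->]] a Ua.
have [N [e [e0 cylU]]] := U_open _ Ua.
pose m := \big[Num.min/1]_(k < N) w k.
have m0 : 0 < m by apply: lt_bigmin => // k _.
exists (e * m); split; first exact: mulr_gt0.
move=> b ab; apply: cylU => k kN.
have wk_m : m <= w k by exact: (bigmin_le _ (Ordinal kN)).
rewrite -(ltr_pM2l (w_gt0 k)) [w k * e]mulrC.
apply: le_lt_trans (le_trans (wsum_term_le _ _ k) (wsum_le_wdist a b _)) _.
by apply: lt_le_trans ab _; rewrite ler_wpM2l // ltW.
Qed.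

Section BoundedDistance.
Context {M : R}.
Hypothesis M_ge0 : 0 <= M.
Hypothesis d_leM : forall x y, d x y <= M.

Lemma in_wspace_bounded x : in_wspace w d xs x.
Proof.
apply: (nondecreasing_is_cvgn (nondecreasing_wsum x (fun=> xs))).
exists M => _ [n _ <-]; apply: (@le_trans _ _ (M * \sum_(k < n) w k)).
  by rewrite mulr_sumr; apply: ler_sum => k _; rewrite mulrC ler_wpM2r // ltW.
by rewrite -[leRHS]mulr1 ler_wpM2l // sum_weights_le1.
Qed.

Lemma wsum_le_cylinder a b N e n : 0 <= e ->
  (forall k, (k < N)%N -> d (a k) (b k) <= e) ->
  wsum a b n <= e + M * (1 - \sum_(k < N) w k).
Proof.
move=> e_ge0 abe; apply: le_trans (nondecreasing_wsum a b _ _ (leq_addl N n)) _.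
have := sum_weights_le1 (N + n); rewrite /wsum !big_split_ord /= => sum_le1.
apply: lerD.
  apply: (@le_trans _ _ (\sum_(k < N) w k * e)).
    by apply: ler_sum => k _; rewrite ler_wpM2l ?abe // ltW.
  by rewrite -mulr_suml -[leRHS]mul1r ler_wpM2r // sum_weights_le1.
apply: (@le_trans _ _ (M * \sum_(k < n) w (N + k)%N)).
  by rewrite mulr_sumr; apply: ler_sum => k _; rewrite mulrC ler_wpM2r // ltW.
by rewrite ler_wpM2l // lerBrDl.
Qed.

Lemma exists_cylinder_wsum_le r : 0 < r -> exists N e, 0 < e /\
  forall a b, cylinder d a N e b -> forall n, wsum a b n <= r.
Proof.
move=> r_gt0; pose eps := r / 2 / (M + 1).
have M1_gt0 : 0 < M + 1 by rewrite ltr_wpDl.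
have eps_gt0 : 0 < eps by rewrite !divr_gt0.
(* the weights beyond N sum to less than eps, so those coordinates add at
   most M eps <= r / 2 *)
have [N _ SN] := (cvgrPdist_lt _ _).1 w_sum1 eps eps_gt0.
have := SN N (leqnn N); have := sum_weights_le1 N; rewrite /=.
set S := \sum_(k < N) w k => S_le1; rewrite ger0_norm ?subr_ge0 // => S_near1.
have tail : M * (1 - S) <= r / 2.
  apply: (@le_trans _ _ ((M + 1) * (1 - S))).
    by rewrite ler_wpM2r ?subr_ge0 ?lerDl.
  rewrite -[leRHS](divfK (lt0r_neq0 M1_gt0)) -/eps mulrC.
  by rewrite ler_wpM2r ?ltW.
exists N, (r / 2); split; first by rewrite divr_gt0.
move=> a b ab n; have half_ge0 : 0 <= r / 2 by rewrite divr_ge0 ?ltW.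
have := wsum_le_cylinder _ _ _ _ n half_ge0 (fun k kN => ltW (ab k kN)).
by rewrite -/S; lra.
Qed.

Lemma subspace_prod_open_metric_open (A : set W) :
  metric_open wd A -> subspace_prod_open d (in_wspace w d xs) A.
Proof.
move=> A_open.
exists (fun y => exists h : in_wspace w d xs y, A (exist _ y h)); split.
  move=> x [x_in Ax]; have [r [r_gt0 ballA]] := A_open _ Ax.
  have [|N [e [e_gt0 cyl_ball]]] := exists_cylinder_wsum_le (r / 2); first by lra.
  exists N, e; split => // y xy; exists (in_wspace_bounded y); apply: ballA.
  have := wdist_le (exist _ x x_in) (exist _ y (in_wspace_bounded y)) _
    (cyl_ball _ _ xy).
  lra.
apply/seteqP; split => -[x x_in] /=; first by exists x_in.
by move=> [x_in' Ax]; rewrite (Prop_irrelevance x_in x_in').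
Qed.

End BoundedDistance.

Lemma wsum_update x N t n :
  wsum (update x N t) x n = if (N < n)%N then w N * d t (x N) else 0.
Proof.
elim: n => [|n IH]; first by rewrite /wsum big_ord0.
rewrite /wsum big_ord_recr /= -/(wsum _ _ n) IH /update.
case: (ltngtP N n) => [Nn|nN|<-]; last by rewrite ltnSn add0r.
  by rewrite ltnS (ltnW Nn) dxx mulr0 addr0.
by rewrite ltnNge nN dxx mulr0 add0r.
Qed.

Lemma unbounded_wball_not_subspace_prod_open : unbounded d ->
  exists A : set W,
    metric_open wd A /\ ~ subspace_prod_open d (in_wspace w d xs) A.
Proof.
move=> dunb.
have cst_in : in_wspace w d xs (fun=> xs).
  apply: (nondecreasing_is_cvgn (nondecreasing_wsum _ _)); exists 0 => _ [n _ <-].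
  by rewrite /wsum big1 // => k _; rewrite dxx mulr0.
pose c : W := exist _ (fun=> xs) cst_in.
exists [set a | wd c a < 1]; split; first exact: metric_open_ball wdist_triangle.
move=> [U [U_open ballU]].
have Uc : U (fun=> xs).
  have : [set a | wd c a < 1] c by rewrite /= wdistxx ltr01.
  by rewrite ballU.
have [N [e [e_gt0 cylU]]] := U_open _ Uc.
have [u far_u] := unbounded_far_from dsym dtri xs dunb (w N)^-1.
pose y := update (fun=> xs) N u.
have y_in : in_wspace w d xs y.
  apply: (nondecreasing_is_cvgn (nondecreasing_wsum y (fun=> xs))).
  exists (w N * d u xs) => _ [n _ <-]; rewrite -/(wsum _ _ n) wsum_update.
  by case: ifP => _; [exact: lexx | exact: mulr_ge0 (ltW (w_gt0 N)) (d_ge0 _ _)].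
have : [set a | wd c a < 1] (exist _ y y_in).
  by rewrite ballU; apply: cylU => k kN; rewrite /= /y /update ltn_eqF // dxx.
rewrite /= ltNge => /negP; apply.
apply: le_trans (wsum_le_wdist c _ N.+1); apply: le_trans (wsum_term_le _ _ N).
rewrite /= /y /update eqxx dsym -[leLHS](mulfV (lt0r_neq0 (w_gt0 N))).
by rewrite ler_pM2l // ltW.
Qed.

End WeightedDistance.

Theorem lemmaB1 (R : realType) (T : Type) (d : T -> T -> R) (w : nat -> R)
  (xs : T) :
  polish d -> admissible_weights w ->
  (strictly_finer (metric_open (wdist w d xs))
      (subspace_prod_open d (in_wspace w d xs))
    <-> unbounded d) /\
  (opencover_compact (metric_open d) ->
    opencover_compact (metric_open (wdist w d xs))).
Proof.
move=> [[d_ge0 d0 dsym dtri] _ _] [w_bnd _ w_sum1 _].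
have dxx x : d x x = 0 by apply/d0.
have w_gt0 k : 0 < w k by case/andP: (w_bnd k).
have coarser := subspace_prod_open_metric_open xs d_ge0 dsym dtri w_gt0 w_sum1.
split; first split.
- move=> [_ [A [A_open A_not_prod]]].
  apply: contrapT => /not_unbounded_bound[M M_ge0 d_leM].
  exact/A_not_prod/(coarser M M_ge0 d_leM).
- move=> dunb; split; first exact: metric_open_subspace_prod_open.
  exact: unbounded_wball_not_subspace_prod_open.
- move=> T_compact.
  have [M M_ge0 d_leM] :=
    not_unbounded_bound (opencover_compact_not_unbounded dxx dsym dtri T_compact).
  apply: (@opencover_compact_subtype _ _ (prod_open d)
    (metric_open (wdist w d xs))).
  - exact: (in_wspace_bounded xs d_ge0 w_gt0 w_sum1 M_ge0 d_leM).
  - exact: coarser M M_ge0 d_leM.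
  - exact: prod_opencover_compact dxx dtri T_compact.
Qed.
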